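(* For every single-elimination tournament $\mathcal{T}$ with $n$ players and every scoring system $\sigma$ of $\mathcal{T}$, we have $\dim(\mathcal{T},\sigma)\le n-1$.
   Context: A single-elimination tournament is a finite directed graph $\mathcal{T}$ such that: (a) $\mathcal{T}$ has exactly one sink (vertex with no out-neighbours); (b) every non-sink vertex has exactly one out-neighbour; (c) $\mathcal{T}$ has no directed cycles; (d) $|N^-(v)|\ne 1$ for every vertex $v$, where $N^-(v)$ denotes the set of in-neighbours of $v$. The players $P(\mathcal{T})$ are the sources (vertices with no in-neighbours) and the matches are $M(\mathcal{T})=V(\mathcal{T})\setminus P(\mathcal{T})$. A bracket is a function $B:V(\mathcal{T})\to P(\mathcal{T})$ with $B(a)=a$ for every player $a$ and $B(x)\in\{B(u):u\in N^-(x)\}$ for every match $x$. A scoring system is any function $\sigma:M(\mathcal{T})\to\mathbb{R}_{>0}$. For brackets $B,B'$ let $\mathrm{score}_\sigma(B,B')=\sum_{x\in M(\mathcal{T}):\,B(x)=B'(x)}\sigma(x)$. A set of brackets $\mathcal{B}$ is $\sigma$-resolving if for every pair of distinct brackets $B\ne B'$ there is $B_i\in\mathcal{B}$ with $\mathrm{score}_\sigma(B_i,B)\ne\mathrm{score}_\sigma(B_i,B')$. $\dim(\mathcal{T},\sigma)$ denotes the minimum size of a $\sigma$-resolving set. *)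

From HB Require Import structures.
From mathcomp Require Import all_boot all_order all_algebra.
From mathcomp Require Import reals.
Set Implicit Arguments. Unset Strict Implicit. Unset Printing Implicit Defensive.
Import Order.TTheory GRing.Theory Num.Theory.

Section Tournament.
Variable V : finType.
Variable e : rel V.

Definition out_nbrs (v : V) : {set V} := [set u | e v u].
Definition in_nbrs (v : V) : {set V} := [set u | e u v].

Definition is_sink (v : V) : bool := out_nbrs v == set0.

Definition acyclic_graph : Prop := forall u v, e u v -> ~~ connect e v u.

Definition single_elim_tournament : Prop :=
  [/\ #|[set v | is_sink v]| = 1,
      (forall v, ~~ is_sink v -> #|out_nbrs v| = 1),
      acyclic_graph
    & (forall v, #|in_nbrs v| != 1)].

Definition is_player (v : V) : bool := in_nbrs v == set0.
Definition is_match (v : V) : bool := ~~ is_player v.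

Definition players : {set V} := [set v | is_player v].

Definition is_bracket (B : {ffun V -> V}) : Prop :=
  [/\ (forall v, is_player (B v)),
      (forall a, is_player a -> B a = a)
    & (forall x, is_match x -> exists2 u, u \in in_nbrs x & B x = B u)].

Variable R : realType.
Local Open Scope ring_scope.

Definition scoring_system (sigma : V -> R) : Prop :=
  forall x, is_match x -> 0 < sigma x.

Definition score (sigma : V -> R) (B B' : {ffun V -> V}) : R :=
  \sum_(x | is_match x && (B x == B' x)) sigma x.

Definition resolving (sigma : V -> R) (S : {set {ffun V -> V}}) : Prop :=
  (forall Bi, Bi \in S -> is_bracket Bi) /\
  forall B B', is_bracket B -> is_bracket B' -> B != B' ->
    exists2 Bi, Bi \in S & score sigma Bi B != score sigma Bi B'.

End Tournament.

From HB Require Import structures.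
From mathcomp Require Import all_boot all_order all_algebra.
From mathcomp Require Import reals.
Set Implicit Arguments. Unset Strict Implicit. Unset Printing Implicit Defensive.
Import Order.TTheory GRing.Theory Num.Theory.

(* For a player p let [champion p] be the bracket in which p wins every match it
   can reach and every other match follows a fixed default bracket; the n - 1
   champion brackets of the players other than a fixed p0 are resolving.
   Given brackets B <> B', take a match x where they differ but agree at every
   earlier match.  On the way from x to the sink, [champion (B x)] never agrees
   with B' and [champion (B' x)] never agrees with B; at every other match where B
   and B' differ, both champion brackets follow the default bracket.  Hence the
   score difference for B versus B' is strictly larger under [champion (B x)] than
   under [champion (B' x)], so one of the two separates B from B'.  If p0 is B x or
   B' x, then either every disagreement lies after x, and the other champion alone
   separates, or there is a second such minimal x', out of reach of p0. *)

Definition functional (V : finType) (e : rel V) :=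
  forall u v w, e u v -> e u w -> v = w.

Section Digraph.
Variables (V : finType) (e : rel V).

Lemma connect_first_arc a b :
  connect e a b -> a != b -> exists2 v, e a v & connect e v b.
Proof.
move=> /connectP [[|v s] /= ab ->]; first by rewrite eqxx.
case/andP: ab => av vs _; exists v => //.
by apply/connectP; exists s.
Qed.

Lemma connect_last_arc a b :
  connect e a b -> a != b -> exists2 w, connect e a w & e w b.
Proof.
move=> /connectP [s]; elim/last_ind: s => [|s w _] /=; first by move=> _ ->; rewrite eqxx.
rewrite rcons_path last_rcons => /andP [as_ sw] -> _.
by exists (last a s) => //; apply/connectP; exists s.
Qed.

Lemma player_connect p a : is_player e a -> connect e p a -> p = a.
Proof.
move=> /eqP a_source pa; apply/eqP; apply: contraT => npa.
have [w _ wa] := connect_last_arc pa npa.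
have : w \in in_nbrs e a by rewrite inE.
by rewrite a_source inE.
Qed.

Lemma arc_is_match w x : e w x -> is_match e x.
Proof. by move=> wx; apply/set0Pn; exists w; rewrite inE. Qed.

Hypothesis acyc : acyclic_graph e.

Lemma arc_neq u v : e u v -> u != v.
Proof. by move=> uv; apply: contraNneq (acyc uv) => ->; exact: connect0. Qed.

Lemma connect_antisym a b : connect e a b -> connect e b a -> a = b.
Proof.
move=> ab ba; apply/eqP; apply: contraT => nab.
have [v av vb] := connect_first_arc ab nab.
by move: (acyc av); rewrite (connect_trans vb ba).
Qed.

Lemma card_ancestors_lt z x : connect e z x -> z != x ->
  (#|[set y | connect e y z]| < #|[set y | connect e y x]|)%N.
Proof.
move=> zx nzx; apply: proper_card; apply/properP; split.
  by apply/subsetP => y; rewrite !inE => yz; exact: connect_trans yz zx.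
exists x; rewrite !inE ?connect0 //; apply: contra nzx => xz.
by rewrite (connect_antisym zx xz).
Qed.

Lemma ancestor_ind (P : V -> Prop) :
  (forall x, (forall z, connect e z x -> z != x -> P z) -> P x) -> forall x, P x.
Proof.
move=> IH x; move: {2}#|_| (leqnn #|[set y | connect e y x]|) => n.
elim: n x => [|n IHn] x le_x; apply: IH => z zx nzx;
  have lt_zx := leq_trans (card_ancestors_lt zx nzx) le_x; first by [].
by apply: IHn; rewrite -ltnS.
Qed.

Definition minimal_in (D : pred V) x :=
  D x /\ forall z, D z -> connect e z x -> z = x.

Lemma exists_minimal_ancestor (D : pred V) y :
  D y -> exists2 x, minimal_in D x & connect e x y.
Proof.
elim/ancestor_ind: y => y IH Dy.
case: (pickP [pred z | [&& D z, connect e z y & z != y]]) => [z /and3P [Dz zy nzy] | none].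
  have [x minx xz] := IH z zy nzy Dz.
  by exists x => //; exact: connect_trans xz zy.
exists y; last exact: connect0.
split => // z Dz zy; apply/eqP; move: (none z) => /=.
by rewrite Dz zy /= => /negbFE.
Qed.

Hypothesis func : functional e.

Lemma connect_comparable p y z :
  connect e p y -> connect e p z -> connect e y z || connect e z y.
Proof.
move=> /connectP [s]; elim: s p => [|v s IH] p /= ps yE pz; first by rewrite yE pz.
case/andP: ps => pv vs.
have [<-|npz] := eqVneq p z.
  by apply/orP; right; apply/connectP; exists (v :: s) => //=; rewrite pv.
have [w pw wz] := connect_first_arc pz npz.
by move: wz; rewrite -(func pv pw); exact: IH vs yE.
Qed.

Lemma common_ancestor_in_nbrs r u u' z :
  e u z -> e u' z -> connect e r u -> connect e r u' -> u = u'.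
Proof.
move=> uz u'z ru ru'.
wlog uu' : u u' uz u'z ru ru' / connect e u u'.
  move=> wlog_uu'; case/orP: (connect_comparable ru ru') => [|u'u]; first exact: wlog_uu'.
  exact/esym/wlog_uu'.
apply/eqP; apply: contraT => nuu'.
have [v uv vu'] := connect_first_arc uu' nuu'.
by move: (acyc u'z); rewrite (func uz uv) vu'.
Qed.

Lemma minimal_common_ancestor (D : pred V) r x y :
  minimal_in D x -> D y -> connect e r x -> connect e r y -> connect e x y.
Proof.
move=> [_ minx] Dy rx ry; case/orP: (connect_comparable rx ry) => // yx.
by rewrite (minx y Dy yx) connect0.
Qed.

End Digraph.

Lemma single_elim_functional (V : finType) (e : rel V) :
  single_elim_tournament e -> functional e.
Proof.
case=> _ out1 _ _ u v w uv uw.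
have u_nsink : ~~ is_sink e u by apply/set0Pn; exists v; rewrite inE.
have [z out_u] := cards1P (introT eqP (out1 u u_nsink)).
have : v \in out_nbrs e u by rewrite inE.
have : w \in out_nbrs e u by rewrite inE.
by rewrite out_u !inE => /eqP -> /eqP ->.
Qed.

Section Brackets.
Variables (V : finType) (e : rel V).
Hypotheses (acyc : acyclic_graph e) (func : functional e).

Lemma bracket_connect B : is_bracket e B -> forall x, connect e (B x) x.
Proof.
case=> _ B_fix B_match; elim/(ancestor_ind acyc) => x IH.
have [x_player | x_match] := boolP (is_player e x); first by rewrite B_fix.
have [u] := B_match x x_match; rewrite inE => ux ->.
exact: connect_trans (IH u (connect1 ux) (arc_neq acyc ux)) (connect1 ux).
Qed.

Lemma bracket_winner_path B w z :
  is_bracket e B -> connect e w z -> connect e (B z) w -> B w = B z.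
Proof.
move=> bB; elim/(ancestor_ind acyc): z w => z IH w wz Bzw.
have [-> //|nwz] := eqVneq w z.
have [u' wu' u'z] := connect_last_arc wz nwz.
have [_ _ B_match] := bB.
have [u] := B_match z (arc_is_match u'z); rewrite inE => uz Bz.
have Bzu : connect e (B z) u by rewrite Bz; exact: bracket_connect.
have uu' := common_ancestor_in_nbrs acyc func uz u'z Bzu (connect_trans Bzw wu').
rewrite Bz; apply: IH (connect1 uz) (arc_neq acyc uz) _ _ _; first by rewrite uu'.
by rewrite -Bz.
Qed.

Definition entrant x p := is_player e p && connect e p x.

(* Taking the [enum_rank]-least entrant at every match makes these choices
   consistent along the tree. *)
Definition first_entrant x p :=
  entrant x p && [forall q, entrant x q ==> (enum_rank p <= enum_rank q)%N].

Definition default_bracket : {ffun V -> V} :=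
  [ffun x => odflt x [pick p | first_entrant x p]].

Lemma exists_entrant x : exists p, entrant x p.
Proof.
elim/(ancestor_ind acyc): x => x IH.
have [x_player | /set0Pn [u]] := boolP (is_player e x).
  by exists x; rewrite /entrant x_player connect0.
rewrite inE => ux; have [p /andP [p_player pu]] := IH u (connect1 ux) (arc_neq acyc ux).
by exists p; rewrite /entrant p_player (connect_trans pu (connect1 ux)).
Qed.

Lemma default_bracket_first x : first_entrant x (default_bracket x).
Proof.
rewrite ffunE; case: pickP => [p //|none].
have [p0 p0x] := exists_entrant x.
case: (arg_minnP (fun p => enum_rank p : nat) p0x) => p px pmin.
move: (none p); rewrite /first_entrant px /=; move/negbT/negP; case.
by apply/forallP => q; apply/implyP; exact: pmin.
Qed.

Lemma first_entrant_uniq x p q : first_entrant x p -> first_entrant x q -> p = q.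
Proof.
case/andP => px /forallP pmin; case/andP => qx /forallP qmin.
apply: enum_rank_inj; apply: val_inj; apply/eqP.
by rewrite eqn_leq (implyP (pmin q) qx) (implyP (qmin p) px).
Qed.

Lemma default_bracket_is_bracket : is_bracket e default_bracket.
Proof.
split=> [v | a a_player | x x_match].
- by case/andP: (default_bracket_first v) => /andP [].
- case/andP: (default_bracket_first a) => /andP [_ Da_a] _.
  exact: player_connect a_player Da_a.
have /andP [/andP [p_player px] pmin] := default_bracket_first x.
have npx : default_bracket x != x by apply: contraNneq x_match => <-.
have [w pw wx] := connect_last_arc px npx.
exists w; first by rewrite inE.
apply: first_entrant_uniq (default_bracket_first w).
rewrite /first_entrant /entrant p_player pw /=.
apply/forallP => q; apply/implyP => /andP [q_player qw].
apply: (implyP (forallP pmin q)).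
by rewrite /entrant q_player (connect_trans qw (connect1 wx)).
Qed.

Definition champion p : {ffun V -> V} :=
  [ffun y => if connect e p y then p else default_bracket y].

Lemma champion_is_bracket p : is_player e p -> is_bracket e (champion p).
Proof.
move=> p_player; have [D_player D_fix D_match] := default_bracket_is_bracket.
split=> [v | a a_player | x x_match]; rewrite ffunE.
- by case: ifP.
- by case: ifP => [/(player_connect a_player) | _]; last exact: D_fix.
case: ifP => px.
  have npx : p != x by apply: contraNneq x_match => <-.
  have [w pw wx] := connect_last_arc px npx.
  by exists w; rewrite ?inE // ffunE pw.
have [u ux Dxu] := D_match x x_match; exists u; rewrite // Dxu.
rewrite [champion _ _]ffunE; case: ifP => // pu.
by move: ux; rewrite inE => ux; rewrite (connect_trans pu (connect1 ux)) in px.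
Qed.

Definition champion_brackets p0 : {set {ffun V -> V}} :=
  champion @: (players e :\ p0).

Lemma champion_in_brackets p0 p :
  is_player e p -> p != p0 -> champion p \in champion_brackets p0.
Proof. by move=> p_player np0; apply: imset_f; rewrite !inE np0 p_player. Qed.

Lemma card_champion_brackets p0 :
  p0 \in players e -> (#|champion_brackets p0| <= #|players e| - 1)%N.
Proof.
move=> p0_player; apply: leq_trans (leq_imset_card _ _) _.
by rewrite (cardsD1 p0 (players e)) p0_player add1n subn1.
Qed.

Lemma champion_winner_in_brackets p0 B x :
  is_bracket e B -> B x != p0 -> champion (B x) \in champion_brackets p0.
Proof. by case=> B_player _ _; exact: champion_in_brackets. Qed.

Definition disagreement (B B' : {ffun V -> V}) : pred V := [pred y | B y != B' y].

Lemma minimal_disagreementC B B' x :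
  minimal_in e (disagreement B B') x -> minimal_in e (disagreement B' B) x.
Proof.
by case=> Dx minx; split=> [|z]; rewrite /disagreement /= eq_sym; [exact: Dx | exact: minx].
Qed.

Lemma champion_outside B B' r x y :
  minimal_in e (disagreement B B') x -> connect e r x -> ~~ connect e x y ->
  B y != B' y -> champion r y = default_bracket y.
Proof.
move=> minx rx nxy Dy; rewrite ffunE; case: ifP => // ry.
by rewrite (minimal_common_ancestor func minx Dy rx ry) in nxy.
Qed.

Section Scores.
Variables (R : realType) (sigma : V -> R).
Hypothesis sigma_pos : scoring_system e sigma.
Local Open Scope ring_scope.

Definition agreement (C B : {ffun V -> V}) y : R := if C y == B y then sigma y else 0.

Definition gain (B B' C : {ffun V -> V}) y := agreement C B y - agreement C B' y.

Lemma score_subE (B B' C : {ffun V -> V}) :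
  score e sigma C B - score e sigma C B' = \sum_(y | is_match e y) gain B B' C y.
Proof. by rewrite /score !big_mkcondr -sumrB. Qed.

Lemma gainC (B B' C : {ffun V -> V}) y : gain B' B C y = - gain B B' C y.
Proof. by rewrite /gain opprB. Qed.

Lemma gain_eq0 (B B' C : {ffun V -> V}) y : B y = B' y -> gain B B' C y = 0.
Proof. by rewrite /gain /agreement => ->; rewrite subrr. Qed.

Section MinimalDisagreement.
Variables (B B' : {ffun V -> V}) (x : V).
Hypotheses (bB : is_bracket e B) (bB' : is_bracket e B').
Hypothesis minx : minimal_in e (disagreement B B') x.

Lemma minimal_disagreement_match : is_match e x.
Proof.
case: minx => /= Dx _; apply: contra Dx => x_player.
by case: bB => _ -> //; case: bB' => _ -> //.
Qed.

(* [B' y = B x] below [x] would force [B' x = B x] by [bracket_winner_path]. *)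
Lemma champion_gain_below y :
  is_match e y -> connect e x y -> 0 <= gain B B' (champion (B x)) y.
Proof.
move=> y_match xy; have [/= Dx _] := minx.
have Bxx := bracket_connect bB x.
have nB'y : B' y != B x.
  apply: contraNneq Dx => B'y; rewrite eq_sym.
  by rewrite -B'y (bracket_winner_path bB' xy) // B'y.
rewrite /gain /agreement ffunE (connect_trans Bxx xy) [B x == B' y]eq_sym (negbTE nB'y).
by rewrite subr0; case: ifP => // _; exact: ltW (sigma_pos y_match).
Qed.

Lemma champion_gain_at : gain B B' (champion (B x)) x = sigma x.
Proof.
have [/= Dx _] := minx.
by rewrite /gain /agreement ffunE bracket_connect // eqxx (negbTE Dx) subr0.
Qed.

End MinimalDisagreement.

Lemma champions_swing_neq0 B B' x :
  is_bracket e B -> is_bracket e B' -> minimal_in e (disagreement B B') x ->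
  \sum_(y | is_match e y)
    (gain B B' (champion (B x)) y - gain B B' (champion (B' x)) y) != 0.
Proof.
move=> bB bB' minx; have minx' := minimal_disagreementC minx.
have x_match := minimal_disagreement_match bB bB' minx.
rewrite psumr_neq0 => [|y y_match].
  apply/hasP; exists x; rewrite ?mem_index_enum // x_match /=.
  rewrite [gain B B' (champion (B' x)) x]gainC (champion_gain_at bB minx).
  by rewrite (champion_gain_at bB' minx') opprK addr_gt0 // sigma_pos.
have [xy | nxy] := boolP (connect e x y).
  rewrite subr_ge0 (le_trans _ (champion_gain_below bB bB' minx y_match xy)) //.
  by rewrite gainC oppr_le0 (champion_gain_below bB' bB minx' y_match xy).
have [eBy | Dy] := eqVneq (B y) (B' y); first by rewrite !gain_eq0 // subrr.
rewrite /gain /agreement (champion_outside minx (bracket_connect bB x) nxy Dy).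
by rewrite (champion_outside minx (bracket_connect bB' x) nxy Dy) subrr.
Qed.

Lemma champion_swing_neq0 B B' x :
  is_bracket e B -> is_bracket e B' -> minimal_in e (disagreement B B') x ->
  (forall z, B z != B' z -> connect e x z) ->
  \sum_(y | is_match e y) gain B B' (champion (B x)) y != 0.
Proof.
move=> bB bB' minx below_x.
have x_match := minimal_disagreement_match bB bB' minx.
rewrite psumr_neq0 => [|y y_match].
  apply/hasP; exists x; rewrite ?mem_index_enum // x_match /=.
  by rewrite (champion_gain_at bB minx) sigma_pos.
have [xy | nxy] := boolP (connect e x y); first exact: champion_gain_below.
rewrite gain_eq0 //; apply/eqP; apply: contraNT nxy; exact: below_x.
Qed.

Lemma champions_distinguish p0 B B' x :
  is_bracket e B -> is_bracket e B' -> minimal_in e (disagreement B B') x ->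
  p0 \notin [:: B x; B' x] ->
  exists2 C, C \in champion_brackets p0 & score e sigma C B != score e sigma C B'.
Proof.
move=> bB bB' minx; rewrite !inE negb_or ![p0 == _]eq_sym => /andP [Bx_p0 B'x_p0].
have := champions_swing_neq0 bB bB' minx; rewrite sumrB -!score_subE.
set C := champion (B x).
have [eq_score | neq_score] := eqVneq (score e sigma C B) (score e sigma C B').
- rewrite eq_score subrr sub0r oppr_eq0 subr_eq0 => neq_score'.
  by exists (champion (B' x)); first exact: champion_winner_in_brackets.
- by exists C; first exact: champion_winner_in_brackets.
Qed.

Lemma champion_distinguishes_below p0 B B' x :
  is_bracket e B -> is_bracket e B' -> minimal_in e (disagreement B B') x ->
  (forall z, B z != B' z -> connect e x z) ->
  exists2 C, C \in champion_brackets p0 & score e sigma C B != score e sigma C B'.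
Proof.
move=> bB bB' minx below_x; have [Dx _] := minx.
have [Bx_p0 | nBx_p0] := eqVneq (B x) p0.
- exists (champion (B' x)).
    by apply: champion_winner_in_brackets bB' _; rewrite -Bx_p0 eq_sym.
  rewrite eq_sym -subr_eq0 score_subE.
  apply: champion_swing_neq0 bB' bB (minimal_disagreementC minx) _ => z.
  by rewrite eq_sym; exact: below_x.
- exists (champion (B x)); first exact: champion_winner_in_brackets.
  by rewrite -subr_eq0 score_subE; exact: champion_swing_neq0.
Qed.

(* Two minimal disagreements have no common ancestor, so [p0] can be the winner of
   at most one of them. *)
Lemma champion_brackets_resolving p0 : resolving e sigma (champion_brackets p0).
Proof.
split=> [C /imsetP [p] | B B' bB bB' nBB'].
  by rewrite !inE => /andP [_ p_player] ->; exact: champion_is_bracket.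
have [y Dy] : exists y, B y != B' y.
  apply/existsP; apply: contraNT nBB' => /existsPn agree.
  by apply/eqP/ffunP => y; apply/eqP/negbNE/agree.
have [x minx _] := exists_minimal_ancestor acyc (D := disagreement B B') Dy.
have [below_x | /forallPn [z]] := boolP [forall z, (B z != B' z) ==> connect e x z].
  apply: champion_distinguishes_below bB bB' minx _ => z.
  exact: implyP (forallP below_x z).
rewrite negb_imply => /andP [Dz nxz].
have [x' minx' x'z] := exists_minimal_ancestor acyc (D := disagreement B B') Dz.
have p0_reaches w : p0 \in [:: B w; B' w] -> connect e p0 w.
  by rewrite !inE => /orP [] /eqP ->; exact: bracket_connect.
have [p0_x | p0_nx] := boolP (p0 \in [:: B x; B' x]); last first.
  exact: champions_distinguish minx p0_nx.
have [Dx' _] := minx'.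
apply: (champions_distinguish bB bB' minx'); apply: contra nxz => /p0_reaches p0x'.
apply: connect_trans _ x'z.
exact: (minimal_common_ancestor func minx Dx' (p0_reaches x p0_x) p0x').
Qed.

End Scores.
End Brackets.

Theorem theorem1p6 (R : realType) (V : finType) (e : rel V) (sigma : V -> R) :
  single_elim_tournament e ->
  scoring_system e sigma ->
  exists S : {set {ffun V -> V}},
    resolving e sigma S /\ (#|S| <= #|players e| - 1)%N.
Proof.
move=> tourn sigma_pos; have [one_sink _ acyc _] := tourn.
have func := single_elim_functional tourn.
have /cards1P [s _] := introT eqP one_sink.
have [p0 /andP [p0_player _]] := exists_entrant acyc s.
exists (champion_brackets e p0); split; first exact: champion_brackets_resolving.
by apply: card_champion_brackets; rewrite inE.
Qed.
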